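(* Let $l\geq 1$ and $f\in C^{l-1}(\mathbb{R})$, and set $T_l(t)=\frac{(1-t)^{l+1}}{t}f(1-t)$ for $t>0$. Then $$[D^{l-1}T_{l}](t)=(-1)^{l-1}\sum_{m=0}^{l-1}P_{m,l}(t)f^{(m)}(1-t),$$ where $$P_{m,l}(t)=\sum_{\nu=m}^{l-1}E_{\nu,m,l}\frac{(1-t)^{\nu+2}}{t^{\nu+l-m}},\qquad E_{\nu,m,l}=\frac{(l-1)!}{2^{\nu-m}m!}\binom{l+1}{\nu+2}\binom{l-1+\nu-m}{\nu-m}.$$
   Context: $D$ denotes the operator $(D\varphi)(t)=\frac{1}{t}\varphi'(t)$ acting on functions of $t$ (here applied to $t\mapsto T_l(t)$), and $D^{j}$ its $j$-fold iterate. $\binom{a}{b}=0$ if $b>a$ or $b<0$. *)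

From Stdlib Require Import Reals Arith.
From Coquelicot Require Import Coquelicot.
Open Scope R_scope.

Definition Ck (k : nat) (f : R -> R) : Prop :=
  forall m : nat, (m <= k)%nat ->
    (forall x, ex_derive_n f m x) /\ (forall x, continuous (Derive_n f m) x).

Definition binomR (a b : nat) : R := if Nat.leb b a then Binomial.C a b else 0.

Definition T (l : nat) (f : R -> R) : R -> R :=
  fun t => (1 - t) ^ (l + 1) / t * f (1 - t).

Definition Dop (phi : R -> R) : R -> R := fun t => Derive phi t / t.
Definition Diter (j : nat) (phi : R -> R) : R -> R := Nat.iter j Dop phi.

Definition E (nu m l : nat) : R :=
  INR (fact (l - 1)) / (2 ^ (nu - m) * INR (fact m))
  * binomR (l + 1) (nu + 2) * binomR (l - 1 + nu - m) (nu - m).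

Definition P (m l : nat) (t : R) : R :=
  sum_n_m (fun nu => E nu m l * ((1 - t) ^ (nu + 2) / t ^ (nu + l - m))) m (l - 1).

From Stdlib Require Import Reals Arith Lia Lra.
From Coquelicot Require Import Coquelicot.
Open Scope R_scope.

(* Since D is (1/t) d/dt, it maps the monomial (1-t)^a t^-b f^(m)(1-t) to minus the sum of
   a (1-t)^(a-1) t^-(b+1) f^(m)(1-t), b (1-t)^a t^-(b+2) f^(m)(1-t) and
   (1-t)^a t^-(b+1) f^(m+1)(1-t).  Starting from T_l, (-1)^j D^j T_l is therefore a combination
   of the monomials with a = l+1-A, b = 1+j+B and derivative order m, where A + B + m = j
   counts how often D hit (1-t), the power of t, and f.  The coefficients obey
   c_(j+1)(A,B,m) = (l+2-A) c_j(A-1,B,m) + (j+B) c_j(A,B-1,m) + c_j(A,B,m-1),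
   which is solved by C(l+1,A) (j+B)! / (m! B! 2^B) because A + 2B + m = j+1+B.
   For j = l-1 and nu = m+B this coefficient is E_(nu,m,l). *)

(* Coquelicot's sum lemmas restated at type R, where rewrite and apply find them. *)
Lemma sum_n_Rplus (u v : nat -> R) n :
  sum_n (fun k => u k + v k) n = sum_n u n + sum_n v n.
Proof. exact (sum_n_plus u v n). Qed.

Lemma sum_n_Rmult_l (c : R) (u : nat -> R) n :
  sum_n (fun k => c * u k) n = c * sum_n u n.
Proof. exact (sum_n_mult_l c u n). Qed.

Lemma sum_n_zero (u : nat -> R) n :
  (forall k, (k <= n)%nat -> u k = 0) -> sum_n u n = 0.
Proof.
  intros Hu. rewrite (sum_n_ext_loc u (fun _ => 0)) by exact Hu.
  rewrite sum_n_const. apply Rmult_0_r.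
Qed.

Lemma sum_n_shift (u : nat -> R) n : u n = 0 ->
  sum_n u n = sum_n (fun i => match i with 0%nat => 0 | S k => u k end) n.
Proof.
  intros Hn. destruct n as [|n].
  - rewrite !sum_O. exact Hn.
  - unfold sum_n. rewrite sum_n_Sm, Hn by lia.
    rewrite (sum_Sn_m (fun i => match i with 0%nat => 0 | S k => u k end)) by lia.
    rewrite <- sum_n_m_S.
    unfold plus, zero; simpl. rewrite Rplus_0_r, Rplus_0_l. reflexivity.
Qed.

Lemma sum_n_trunc (a : nat -> R) k n : (k <= n)%nat ->
  (forall i, (k < i <= n)%nat -> a i = 0) -> sum_n a n = sum_n a k.
Proof.
  intros Hk Ha. unfold sum_n.
  rewrite (sum_n_m_Chasles _ 0 k n), (sum_n_m_ext_loc a (fun _ => zero) (S k) n)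
    by (try lia; intros; apply Ha; lia).
  rewrite sum_n_m_const_zero. apply plus_zero_r.
Qed.

Lemma sum_n_m_offset (a : nat -> R) m n : (m <= n)%nat ->
  sum_n_m a m n = sum_n (fun k => a (m + k)%nat) (n - m).
Proof.
  revert a n. induction m as [|m IH]; intros a n Hmn.
  - rewrite Nat.sub_0_r. reflexivity.
  - destruct n as [|n]; [lia|].
    rewrite <- sum_n_m_S, IH by lia. reflexivity.
Qed.

Lemma sum_box_shift (c a b M : nat -> nat -> R) n :
  (forall m, c m n = 0) -> (forall B, c n B = 0) ->
  sum_n (fun m => sum_n (fun B =>
      c m B * (a m B * M m B + b m B * M m (S B) + M (S m) B)) n) n
  = sum_n (fun m => sum_n (fun B =>
      (a m B * c m B + match B with 0%nat => 0 | S B' => b m B' * c m B' end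
              + match m with 0%nat => 0 | S m' => c m' B end) * M m B) n) n.
Proof.
  intros Hcm HcB.
  set (S1 := fun m B => a m B * c m B * M m B).
  set (S2 := fun m B => b m B * c m B * M m (S B)).
  set (S3 := fun m B => c m B * M (S m) B).
  transitivity (sum_n (fun m => sum_n (S1 m) n) n + sum_n (fun m => sum_n (S2 m) n) n
                + sum_n (fun m => sum_n (S3 m) n) n).
  { rewrite <- !sum_n_Rplus. apply sum_n_ext. intros m. rewrite <- !sum_n_Rplus.
    apply sum_n_ext. intros B. unfold S1, S2, S3. simpl. ring. }
  rewrite (sum_n_ext (fun m => sum_n (S2 m) n)
             (fun m => sum_n (fun B => match B with 0%nat => 0 | S B' => S2 m B' end) n))
    by (intros m; apply sum_n_shift; unfold S2; rewrite Hcm; ring).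
  assert (HS3 : sum_n (S3 n) n = 0).
  { apply sum_n_zero. intros B _. unfold S3. rewrite HcB. ring. }
  rewrite (sum_n_shift (fun m => sum_n (S3 m) n) n HS3).
  rewrite <- !sum_n_Rplus. apply sum_n_ext. intros m.
  destruct m as [|m]; [rewrite Rplus_0_r|]; rewrite <- ?sum_n_Rplus;
    apply sum_n_ext; intros [|B]; unfold S1, S2, S3; simpl; ring.
Qed.

Lemma is_derive_sum_n_R (F : nat -> R -> R) (dF : nat -> R) n t :
  (forall k, (k <= n)%nat -> is_derive (F k) t (dF k)) ->
  is_derive (fun x => sum_n (fun k => F k x) n) t (sum_n dF n).
Proof. exact (is_derive_sum_n F n t dF). Qed.

Lemma is_derive_scal_guarded (c : R) (g : R -> R) t dg :
  (c <> 0 -> is_derive g t dg) -> is_derive (fun x => c * g x) t (c * dg).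
Proof.
  intros Hg. destruct (Req_dec c 0) as [->|Hc].
  - rewrite Rmult_0_l. apply (is_derive_ext (fun _ => 0)).
    + intros x. simpl. ring.
    + apply (is_derive_const (V := R_NormedModule)).
  - apply is_derive_scal, Hg, Hc.
Qed.

Definition pow_term (f : R -> R) (a b m : nat) (t : R) : R :=
  (1 - t) ^ a / t ^ b * Derive_n f m (1 - t).

Lemma is_derive_pow_term f a b m t : t <> 0 -> ex_derive (Derive_n f m) (1 - t) ->
  is_derive (pow_term f a b m) t
    (- t * (INR a * pow_term f (a - 1) (b + 1) m t + INR b * pow_term f a (b + 2) m t
            + pow_term f a (b + 1) (S m) t)).
Proof.
  intros Ht Hd. unfold pow_term.
  auto_derive.
  - repeat split; [apply pow_nonzero, Ht | exact Hd].
  - change (Derive (fun x => Derive_n f m x)) with (Derive_n f (S m)).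
    replace (1 + - t) with (1 - t) by ring.
    assert (Htb : forall k, t ^ k <> 0) by (intros; apply pow_nonzero, Ht).
    rewrite !pow_add.
    destruct a as [|a]; destruct b as [|b]; simpl; rewrite ?Nat.sub_0_r, ?S_INR;
      field; auto.
Qed.

Lemma binomR_succ n k : INR (S k) * binomR n (S k) = INR (n - k) * binomR n k.
Proof.
  unfold binomR. destruct (le_lt_dec (S k) n) as [Hk|Hk].
  - rewrite !(proj2 (Nat.leb_le _ _)) by lia.
    rewrite pascal_step3 by lia. field. apply not_0_INR. lia.
  - rewrite (proj2 (Nat.leb_gt _ _)) by lia.
    replace (n - k)%nat with 0%nat by lia. simpl. ring.
Qed.

Lemma binomR_sym n k : (k <= n)%nat -> binomR n (n - k) = binomR n k.
Proof.
  intros Hk. unfold binomR. rewrite !(proj2 (Nat.leb_le _ _)) by lia.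
  symmetry. apply pascal_step1. exact Hk.
Qed.

Definition weight (l A B m : nat) : R :=
  binomR (l + 1) A / (INR (fact m) * INR (fact B) * 2 ^ B).

Ltac nonzero :=
  repeat split;
  first [ apply INR_fact_neq_0 | apply pow_nonzero; lra | apply not_0_INR; lia
        | assumption ].

Lemma weight_succ_A l A B m :
  INR (l + 1 - A) * weight l A B m = INR (S A) * weight l (S A) B m.
Proof. unfold weight, Rdiv. rewrite <- !Rmult_assoc, binomR_succ. reflexivity. Qed.

Lemma weight_succ_B l A B m : weight l A B m = 2 * INR (S B) * weight l A (S B) m.
Proof.
  unfold weight. rewrite fact_simpl, !mult_INR, <- tech_pow_Rmult.
  field. nonzero.
Qed.

Lemma weight_succ_m l A B m : weight l A B m = INR (S m) * weight l A B (S m).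
Proof.
  unfold weight. rewrite fact_simpl, mult_INR.
  field. nonzero.
Qed.

Definition expansion_coef (l j m B : nat) : R :=
  if (m + B <=? j)%nat then INR (fact (j + B)) * weight l (j - m - B) B m else 0.

Lemma expansion_coef_eq0 l j m B : (j < m + B)%nat -> expansion_coef l j m B = 0.
Proof.
  intros H. unfold expansion_coef. rewrite (proj2 (Nat.leb_gt _ _)) by lia. reflexivity.
Qed.

Lemma expansion_coef_val l j m B : (m + B <= j)%nat ->
  expansion_coef l j m B = INR (fact (j + B)) * weight l (j - m - B) B m.
Proof.
  intros H. unfold expansion_coef. rewrite (proj2 (Nat.leb_le _ _)) by lia. reflexivity.
Qed.

Lemma expansion_coef_succ l j m B :
  expansion_coef l (S j) m B = INR (l + 1 - (j - m - B)) * expansion_coef l j m B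
    + match B with 0%nat => 0 | S B' => INR (1 + j + B') * expansion_coef l j m B' end
    + match m with 0%nat => 0 | S m' => expansion_coef l j m' B end.
Proof.
  destruct (le_lt_dec (m + B) (S j)) as [Hle|Hgt].
  2:{ rewrite !expansion_coef_eq0 by lia.
      destruct B, m; rewrite ?expansion_coef_eq0 by lia; ring. }
  set (A := (S j - m - B)%nat).
  set (F := INR (fact (j + B))).
  assert (H1 : INR (l + 1 - (j - m - B)) * expansion_coef l j m B
               = F * (INR A * weight l A B m)).
  { destruct (le_lt_dec (m + B) j) as [H|H].
    - replace A with (S (j - m - B)) by (unfold A; lia).
      rewrite expansion_coef_val, <- weight_succ_A by exact H. unfold F. ring.
    - rewrite expansion_coef_eq0 by exact H.
      replace A with 0%nat by (unfold A; lia). simpl. ring. }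
  assert (H2 : match B with
               | 0%nat => 0
               | S B' => INR (1 + j + B') * expansion_coef l j m B'
               end = F * (2 * INR B * weight l A B m)).
  { destruct B as [|B]; [simpl; ring|].
    rewrite expansion_coef_val by lia. replace (j - m - B)%nat with A by (unfold A; lia).
    rewrite <- weight_succ_B. unfold F.
    replace (j + S B)%nat with (S (j + B)) by lia.
    rewrite fact_simpl, mult_INR. replace (S (j + B)) with (1 + j + B)%nat by lia. ring. }
  assert (H3 : match m with 0%nat => 0 | S m' => expansion_coef l j m' B end
               = F * (INR m * weight l A B m)).
  { destruct m as [|m]; [simpl; ring|].
    rewrite expansion_coef_val by lia. replace (j - m - B)%nat with A by (unfold A; lia).
    rewrite <- weight_succ_m. reflexivity. }
  rewrite H1, H2, H3, expansion_coef_val by exact Hle. fold A. unfold F.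
  replace (S j + B)%nat with (S (j + B)) by lia.
  rewrite fact_simpl, mult_INR.
  replace (S (j + B)) with (A + 2 * B + m)%nat by (unfold A; lia).
  rewrite !plus_INR, mult_INR. simpl (INR 2). ring.
Qed.

Definition expansion_term (l : nat) (f : R -> R) (j m B : nat) : R -> R :=
  pow_term f (l + 1 - (j - m - B)) (1 + j + B) m.

Lemma is_derive_expansion_term l f j m B t :
  t <> 0 -> (m + B <= j)%nat -> ex_derive (Derive_n f m) (1 - t) ->
  is_derive (expansion_term l f j m B) t
    (- t * (INR (l + 1 - (j - m - B)) * expansion_term l f (S j) m B t
            + INR (1 + j + B) * expansion_term l f (S j) m (S B) t
            + expansion_term l f (S j) (S m) B t)).
Proof.
  intros Ht HmB Hd. unfold expansion_term.
  replace (l + 1 - (S j - m - B))%nat with (l + 1 - (j - m - B) - 1)%nat by lia.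
  replace (S j - m - S B)%nat with (j - m - B)%nat by lia.
  replace (S j - S m - B)%nat with (j - m - B)%nat by lia.
  replace (1 + S j + B)%nat with (1 + j + B + 1)%nat by lia.
  replace (1 + S j + S B)%nat with (1 + j + B + 2)%nat by lia.
  apply is_derive_pow_term; assumption.
Qed.

(* The box [0, l-1]^2 of (m, B) is fixed; the coefficient vanishes unless m + B <= j. *)
Definition expansion (l : nat) (f : R -> R) (j : nat) (t : R) : R :=
  (-1) ^ j * sum_n (fun m => sum_n (fun B =>
    expansion_coef l j m B * expansion_term l f j m B t) (l - 1)) (l - 1).

Lemma expansion_0 l f t : (1 <= l)%nat -> expansion l f 0 t = T l f t.
Proof.
  intros Hl. unfold expansion.
  rewrite (sum_n_trunc _ 0), sum_O;
    [| lia | intros m Hm; apply sum_n_zero; intros B _;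
             rewrite expansion_coef_eq0 by lia; ring].
  rewrite (sum_n_trunc _ 0), sum_O;
    [| lia | intros B HB; rewrite expansion_coef_eq0 by lia; ring].
  rewrite expansion_coef_val by lia. unfold weight, binomR, expansion_term, pow_term, T.
  simpl. rewrite C_n_0, Nat.sub_0_r, !Rmult_1_r, Rdiv_1_l, Rinv_1. ring.
Qed.

Lemma expansion_coef_succ_sum l j n (M : nat -> nat -> R) : (j < n)%nat ->
  sum_n (fun m => sum_n (fun B => expansion_coef l (S j) m B * M m B) n) n
  = sum_n (fun m => sum_n (fun B => expansion_coef l j m B *
      (INR (l + 1 - (j - m - B)) * M m B + INR (1 + j + B) * M m (S B) + M (S m) B)) n) n.
Proof.
  intros Hjn.
  rewrite (sum_box_shift (expansion_coef l j) (fun m B => INR (l + 1 - (j - m - B)))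
             (fun _ B => INR (1 + j + B)))
    by (intros; apply expansion_coef_eq0; lia).
  apply sum_n_ext. intros m. apply sum_n_ext. intros B.
  rewrite expansion_coef_succ. reflexivity.
Qed.

Lemma is_derive_expansion l f j t : Ck (l - 1) f -> (S j <= l - 1)%nat -> t <> 0 ->
  is_derive (expansion l f j) t (t * expansion l f (S j) t).
Proof.
  intros Hf Hj Ht.
  set (n := (l - 1)%nat).
  set (M := fun m B => expansion_term l f (S j) m B t).
  assert (Hsucc : t * expansion l f (S j) t = (-1) ^ j * sum_n (fun m => sum_n (fun B =>
      expansion_coef l j m B * (- t * (INR (l + 1 - (j - m - B)) * M m B
                                       + INR (1 + j + B) * M m (S B) + M (S m) B))) n) n).
  { unfold expansion. fold n. rewrite expansion_coef_succ_sum by lia.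
    rewrite <- tech_pow_Rmult, <- !sum_n_Rmult_l. apply sum_n_ext. intros m.
    rewrite <- !sum_n_Rmult_l. apply sum_n_ext. intros B. unfold M. simpl. ring. }
  rewrite Hsucc. unfold expansion. fold n.
  apply is_derive_scal, is_derive_sum_n_R. intros m _.
  apply is_derive_sum_n_R. intros B _.
  apply is_derive_scal_guarded. intros Hc.
  assert (HmB : (m + B <= j)%nat).
  { destruct (le_lt_dec (m + B) j) as [H|H]; [exact H|].
    exfalso. apply Hc, expansion_coef_eq0, H. }
  apply is_derive_expansion_term; [exact Ht | exact HmB |].
  apply (proj1 (Hf (S m) ltac:(lia))).
Qed.

Lemma Diter_T_expansion l f : (1 <= l)%nat -> Ck (l - 1) f ->
  forall j, (j <= l - 1)%nat -> forall t, 0 < t -> Diter j (T l f) t = expansion l f j t.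
Proof.
  intros Hl Hf j. induction j as [|j IH]; intros Hj t Ht.
  - symmetry. apply expansion_0, Hl.
  - change (Diter (S j) (T l f) t) with (Derive (Diter j (T l f)) t / t).
    rewrite (Derive_ext_loc _ (expansion l f j)).
    + rewrite (is_derive_unique _ _ _ (is_derive_expansion l f j t Hf Hj ltac:(lra))).
      field. lra.
    + apply filter_imp with (fun x => 0 < x).
      * intros x Hx. apply IH; [lia | exact Hx].
      * apply (open_gt 0), Ht.
Qed.

Lemma expansion_coef_last l m B : (1 <= l)%nat -> (m + B <= l - 1)%nat ->
  expansion_coef l (l - 1) m B = E (m + B) m l.
Proof.
  intros Hl HmB.
  rewrite expansion_coef_val by exact HmB. unfold weight, E.
  replace (l - 1 - m - B)%nat with (l + 1 - (m + B + 2))%nat by lia.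
  rewrite binomR_sym by lia.
  replace (m + B - m)%nat with B by lia.
  replace (l - 1 + (m + B) - m)%nat with (l - 1 + B)%nat by lia.
  unfold binomR. rewrite !(proj2 (Nat.leb_le _ _)) by lia. unfold Binomial.C.
  replace (l - 1 + B - B)%nat with (l - 1)%nat by lia.
  field. nonzero.
Qed.

Lemma expansion_last l f t : (1 <= l)%nat ->
  expansion l f (l - 1) t
  = (-1) ^ (l - 1) * sum_n_m (fun m => P m l t * Derive_n f m (1 - t)) 0 (l - 1).
Proof.
  intros Hl. unfold expansion, sum_n at 1. f_equal.
  apply sum_n_m_ext_loc. intros m [_ Hm].
  unfold P. rewrite sum_n_m_offset by exact Hm.
  rewrite (sum_n_trunc _ (l - 1 - m));
    [| lia | intros B HB; rewrite expansion_coef_eq0 by lia; ring].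
  rewrite Rmult_comm, <- sum_n_Rmult_l. apply sum_n_ext_loc. intros B HB.
  rewrite expansion_coef_last by lia. unfold expansion_term, pow_term.
  replace (l + 1 - (l - 1 - m - B))%nat with (m + B + 2)%nat by lia.
  replace (1 + (l - 1) + B)%nat with (m + B + l - m)%nat by lia.
  simpl. ring.
Qed.

Theorem lemma3p4 (l : nat) (f : R -> R) (Hl : (1 <= l)%nat) (Hf : Ck (l - 1) f)
  (t : R) (Ht : 0 < t) :
  Diter (l - 1) (T l f) t
  = (-1) ^ (l - 1) * sum_n_m (fun m => P m l t * Derive_n f m (1 - t)) 0 (l - 1).
Proof.
  rewrite (Diter_T_expansion l f Hl Hf (l - 1) (Nat.le_refl _) t Ht).
  apply expansion_last, Hl.
Qed.
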